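(* Assume $Q_{12}>0$. For any $\gamma>0$, $$H(\tilde C_i^{(n)}|\tilde{\mathbf X}_{3-i})\ge n[H(X_i|X_{3-i})-\gamma]+\log Q_{12},\quad i=1,2,$$ $$H(\tilde C_1^{(n)}\tilde C_2^{(n)})\ge n[H(X_1X_2)-\gamma]+\log Q_{12}.$$
   Context: Logs base 2. $\mathcal X_1,\mathcal X_2$ finite; $(X_1,X_2)\sim p_{X_1X_2}$, $(K_1,K_2)\sim p_{K_1K_2}$ on $\mathcal X_1\times\mathcal X_2$. At block length $n$, $(\mathbf X_1,\mathbf X_2)\sim p^n_{X_1X_2}$ i.i.d., $(\mathbf K_1,\mathbf K_2)\sim p^n_{K_1K_2}$ i.i.d., keys independent of sources. A distributed source encryption system: finite $\mathcal C_i^{(n)}$, maps $\Phi_i^{(n)}:\mathcal X_i^n\times\mathcal X_i^n\to\mathcal C_i^{(n)}$ (key, plaintext) and $\Psi^{(n)}$, such that there are maps $\phi_i^{(n)}$, $\psi^{(n)}$ with $\Psi^{(n)}(\mathbf k_1,\mathbf k_2,\Phi_1^{(n)}(\mathbf k_1,\mathbf x_1),\Phi_2^{(n)}(\mathbf k_2,\mathbf x_2))=\psi^{(n)}(\phi_1^{(n)}(\mathbf x_1),\phi_2^{(n)}(\mathbf x_2))$ for all arguments. $C_i^{(n)}:=\Phi_i^{(n)}(\mathbf K_i,\mathbf X_i)$. $\mathcal D^{(n)}:=\{(\mathbf x_1,\mathbf x_2):\psi^{(n)}(\phi_1^{(n)}(\mathbf x_1),\phi_2^{(n)}(\mathbf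 x_2))=(\mathbf x_1,\mathbf x_2)\}$. For $\gamma>0$, $\tilde{\mathcal A}^{(n)}_\gamma$ is the set of $(\mathbf x_1,\mathbf x_2)$ with $\bigl|\frac1n\log\frac1{p^n_{X_i|X_{3-i}}(\mathbf x_i|\mathbf x_{3-i})}-H(X_i|X_{3-i})\bigr|\le\gamma$ ($i=1,2$) and $\bigl|\frac1n\log\frac1{p^n_{X_1X_2}(\mathbf x_1,\mathbf x_2)}-H(X_1X_2)\bigr|\le\gamma$, and $\tilde{\mathcal D}^{(n)}_\gamma:=\tilde{\mathcal A}^{(n)}_\gamma\cap\mathcal D^{(n)}$. $Q_{12}:=p^n_{X_1X_2}(\tilde{\mathcal D}^{(n)}_\gamma)$. The random pair $(\tilde{\mathbf X}_1,\tilde{\mathbf X}_2)$ has law $p^n_{X_1X_2}(\mathbf x_1,\mathbf x_2)/Q_{12}$ on $\tilde{\mathcal D}^{(n)}_\gamma$ and $0$ elsewhere, independent of $(\mathbf K_1,\mathbf K_2)$; $\tilde C_i^{(n)}:=\Phi_i^{(n)}(\mathbf K_i,\tilde{\mathbf X}_i)$. Equivalently, the joint law of $(\tilde C_1^{(n)},\tilde C_2^{(n)},\tilde{\mathbf X}_1,\tilde{\mathbf X}_2)$ is that of $(C_1^{(n)},C_2^{(n)},\mathbf X_1,\mathbf X_2)$ conditioned on $(\mathbf X_1,\mathbf X_2)\in\tilde{\mathcal D}^{(n)}_\gamma$. *)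

From HB Require Import structures.
From mathcomp Require Import all_boot all_order all_algebra.
From mathcomp Require Import reals exp.

Set Implicit Arguments.
Unset Strict Implicit.
Unset Printing Implicit Defensive.

Import Order.TTheory GRing.Theory Num.Theory.
Local Open Scope ring_scope.

Section Info.
Variable R : realType.

Definition log2 (x : R) : R := ln x / ln 2.

Definition is_pmf (T : finType) (p : T -> R) : Prop :=
  (forall t, 0 <= p t) /\ \sum_t p t = 1.

Definition law (T U : finType) (P : T -> R) (f : T -> U) (u : U) : R :=
  \sum_(t | f t == u) P t.

(* Shannon entropy H(f) of the random variable f (base 2, 0 log 0 = 0) *)
Definition entropy (T U : finType) (P : T -> R) (f : T -> U) : R :=
  - \sum_u law P f u * log2 (law P f u).

Definition centropy (T U V : finType) (P : T -> R) (f : T -> U) (g : T -> V) : R :=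
  - \sum_u \sum_v law P (fun t => (f t, g t)) (u, v) *
        log2 (law P (fun t => (f t, g t)) (u, v) / law P g v).

Variables (X1 X2 : finType).

Definition marg1 (p : X1 * X2 -> R) (a : X1) : R := \sum_b p (a, b).
Definition marg2 (p : X1 * X2 -> R) (b : X2) : R := \sum_a p (a, b).

Variable n : nat.

Definition pn (p : X1 * X2 -> R)
  (x : {ffun 'I_n -> X1} * {ffun 'I_n -> X2}) : R :=
  \prod_(i < n) p (x.1 i, x.2 i).

Definition pn_1g2 (p : X1 * X2 -> R) (x1 : {ffun 'I_n -> X1}) (x2 : {ffun 'I_n -> X2}) : R :=
  \prod_(i < n) (p (x1 i, x2 i) / marg2 p (x2 i)).
Definition pn_2g1 (p : X1 * X2 -> R) (x1 : {ffun 'I_n -> X1}) (x2 : {ffun 'I_n -> X2}) : R :=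
  \prod_(i < n) (p (x1 i, x2 i) / marg1 p (x1 i)).

Definition H1g2 (p : X1 * X2 -> R) : R := centropy p (fun t => t.1) (fun t => t.2).
Definition H2g1 (p : X1 * X2 -> R) : R := centropy p (fun t => t.2) (fun t => t.1).
Definition H12 (p : X1 * X2 -> R) : R := entropy p id.

Definition typical (p : X1 * X2 -> R) (gamma : R)
  (x : {ffun 'I_n -> X1} * {ffun 'I_n -> X2}) : bool :=
  [&& `| n%:R^-1 * log2 (pn_1g2 p x.1 x.2)^-1 - H1g2 p | <= gamma,
      `| n%:R^-1 * log2 (pn_2g1 p x.1 x.2)^-1 - H2g1 p | <= gamma &
      `| n%:R^-1 * log2 (pn p x)^-1 - H12 p | <= gamma].

End Info.

(* On D, typicality bounds each conditional surprisal -log p(x_i | x_(3-i)),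
   and the joint one -log p(x), below by n(H - gamma); conditioning the i.i.d.
   source on D divides probabilities by Q12, which adds log Q12 to these bounds.
   Averaging, and using Gibbs' inequality against the product marginal of
   x_(3-i), gives H(X_i | X_(3-i)) >= n(H - gamma) + log Q12 for the conditioned
   source, and likewise for the joint entropy.  On D the decoder recovers the
   source from the ciphertexts and the keys, and the keys are independent of the
   source, so H(C_i | X_(3-i)) >= H(C_i | X_(3-i) K) = H(X_i | X_(3-i)); the
   log-sum inequality proves this directly. *)

From HB Require Import structures.
From mathcomp Require Import all_boot all_order all_algebra.
From mathcomp Require Import reals exp.
From mathcomp Require Import ring lra.
Import Order.TTheory GRing.Theory Num.Theory.
Local Open Scope ring_scope.

Section Log2.
Variable R : realType.
Implicit Types x y : R.

Lemma ln2_gt0 : 0 < ln (2 : R).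
Proof. by apply: ln_gt0; rewrite ltr1n. Qed.

Lemma log2M x y : 0 < x -> 0 < y -> log2 (x * y) = log2 x + log2 y.
Proof. by move=> x0 y0; rewrite /log2 lnM ?posrE // mulrDl. Qed.

Lemma log2V x : 0 < x -> log2 x^-1 = - log2 x.
Proof. by move=> x0; rewrite /log2 lnV ?posrE // mulNr. Qed.

Lemma log2_div x y : 0 < x -> 0 < y -> log2 (x / y) = log2 x - log2 y.
Proof. by move=> x0 y0; rewrite log2M ?invr_gt0 // log2V. Qed.

Lemma log21 : log2 (1 : R) = 0.
Proof. by rewrite /log2 ln1 mul0r. Qed.

Lemma log2_le_subr1 x : 0 < x -> log2 x <= (x - 1) / ln 2.
Proof.
move=> x0; rewrite /log2 ler_pM2r ?invr_gt0 ?ln2_gt0 //.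
by have := @le_ln1Dx R (x - 1); rewrite subrKC; apply; lra.
Qed.

End Log2.

Section LogSum.
Variables (R : realType) (I : finType) (P : pred I) (a b : I -> R).
Hypotheses (a_ge0 : forall i, P i -> 0 <= a i) (b_ge0 : forall i, P i -> 0 <= b i).
Hypothesis supp_ab : forall i, P i -> 0 < a i -> 0 < b i.

Let A := \sum_(i | P i) a i.

(* The pointwise bound is [ln r <= r - 1] at [r = b_i A / (a_i B)]. *)
Lemma log_sum_ineq (B : R) : \sum_(i | P i) b i <= B ->
  \sum_(i | P i) - (a i * log2 (a i / b i)) <= - (A * log2 (A / B)).
Proof.
move=> sumb_le; have A_ge0 : 0 <= A by apply: sumr_ge0.
have [A0|A_neq0] := eqVneq A 0.
  rewrite A0 mul0r oppr0 big1 // => i Pi.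
  by rewrite (psumr_eq0P a_ge0 A0) // mul0r oppr0.
have A_gt0 : 0 < A by rewrite lt0r A_neq0.
have /hasP[i0 _ /andP[Pi0 ai0]] : has (fun i => P i && (0 < a i)) (index_enum I).
  by rewrite -psumr_neq0.
have B_gt0 : 0 < B.
  apply: (lt_le_trans (supp_ab i0 Pi0 ai0)); apply: le_trans sumb_le.
  by rewrite (bigD1 i0) //= lerDl sumr_ge0 // => j /andP[/b_ge0].
have ln2_pos := ln2_gt0 R.
have pointwise i : P i ->
    - (a i * log2 (a i / b i)) + a i * log2 (A / B) <= (b i * A / B - a i) / ln 2.
  move=> Pi; have [ai_gt0|] := ltP 0 (a i); last first.
    move=> ai_le0; have -> : a i = 0 by apply/eqP; rewrite eq_le ai_le0 a_ge0.
    by rewrite !(mul0r, oppr0, addr0, subr0) !divr_ge0 ?mulr_ge0 ?b_ge0 ?ltW.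
  have bi_gt0 := supp_ab i Pi ai_gt0.
  have r_gt0 : 0 < b i * A / (a i * B) by rewrite divr_gt0 ?mulr_gt0.
  have -> : - (a i * log2 (a i / b i)) + a i * log2 (A / B)
            = a i * log2 (b i * A / (a i * B)).
    by rewrite !log2_div ?mulr_gt0 // !log2M //; ring.
  suff <- : a i * ((b i * A / (a i * B) - 1) / ln 2) = (b i * A / B - a i) / ln 2.
    by rewrite ler_pM2l // log2_le_subr1.
  by field; rewrite !lt0r_neq0.
have := ler_sum (index_enum I) pointwise.
rewrite big_split /= -mulr_suml -/A -mulr_suml sumrB -/A -!mulr_suml => le_sum.
have : ((\sum_(i | P i) b i) * A / B - A) / ln 2 <= 0.
  by rewrite pmulr_lle0 ?invr_gt0 // subr_le0 ler_pdivrMr // mulrC ler_pM2l.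
lra.
Qed.
End LogSum.

Lemma gibbs_ineq (R : realType) (I : finType) (a b : I -> R) :
  (forall i, 0 <= a i) -> (forall i, 0 <= b i) -> (forall i, 0 < a i -> 0 < b i) ->
  \sum_i a i = 1 -> \sum_i b i <= 1 -> 0 <= \sum_i a i * log2 (a i / b i).
Proof.
move=> a_ge0 b_ge0 supp_ab suma sumb.
have := @log_sum_ineq R I xpredT a b (fun i _ => a_ge0 i) (fun i _ => b_ge0 i)
  (fun i _ => supp_ab i) 1 sumb.
by rewrite suma divr1 log21 mulr0 oppr0 sumrN oppr_le0.
Qed.

Section Entropy.
Variable R : realType.

Lemma sum_pairE (A K : finType) (F : A * K -> R) :
  \sum_w F w = \sum_x \sum_k F (x, k).
Proof. by rewrite pair_big; apply: eq_bigr => -[]. Qed.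

Lemma centropy_idE (A V : finType) (P : A -> R) (v : A -> V) :
  centropy P id v = - \sum_x P x * log2 (P x / law P v (v x)).
Proof.
rewrite /centropy; congr (- _); apply: eq_bigr => x _.
rewrite (bigD1 (v x)) //= big1 ?addr0 => [|y yx].
  by congr (_ * log2 (_ / _)); apply: big_pred1 => x'; rewrite xpair_eqE andb_idr // => /eqP->.
rewrite [law _ _ _](big_pred0 _ _ _ _ (fun _ => _)) ?mul0r // => x'.
by rewrite xpair_eqE; apply/andP => -[/eqP-> /eqP vx]; rewrite vx eqxx in yx.
Qed.

Lemma entropy_centropy_unit (W U : finType) (P : W -> R) (f : W -> U) :
  \sum_w P w = 1 -> entropy P f = centropy P f (fun _ => tt).
Proof.
move=> sumP; rewrite /entropy /centropy; congr (- _); apply: eq_bigr => u _.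
rewrite (bigD1 tt) //= big1 ?addr0; last by case.
have -> : law P (fun=> tt) tt = 1 by rewrite -sumP; apply: eq_bigl.
by rewrite divr1; congr (_ * log2 _); apply: eq_bigl => w; rewrite xpair_eqE andbT.
Qed.

Lemma law_indep_fst (A K V : finType) (P : A -> R) (pK : K -> R) (v : A -> V) y :
  \sum_k pK k = 1 -> law (fun w : A * K => P w.1 * pK w.2) (fun w => v w.1) y = law P v y.
Proof.
move=> sumK; rewrite /law.
transitivity (\sum_(x | v x == y) \sum_k P x * pK k).
  by rewrite pair_big_dep; apply: eq_bigl => -[x k] /=; rewrite andbT.
by apply: eq_bigr => x _; rewrite -mulr_sumr sumK mulr1.
Qed.

Lemma centropy_ge_cross (W U V : finType) (P b : W -> R) (f : W -> U) (g : W -> V) :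
  (forall w, 0 <= P w) -> (forall w, 0 <= b w) -> (forall w, 0 < P w -> 0 < b w) ->
  (forall u y, \sum_(w | (f w, g w) == (u, y)) b w <= law P g y) ->
  - \sum_w P w * log2 (P w / b w) <= centropy P f g.
Proof.
move=> P_ge0 b_ge0 supp_Pb class_le.
have -> : \sum_w P w * log2 (P w / b w) =
    \sum_u \sum_y \sum_(w | (f w, g w) == (u, y)) P w * log2 (P w / b w).
  by rewrite (partition_big (fun w => (f w, g w)) xpredT) //= pair_big; apply: eq_bigr => -[].
rewrite /centropy -!sumrN; apply: ler_sum => u _; rewrite -!sumrN; apply: ler_sum => y _.
by rewrite -sumrN; apply: log_sum_ineq => // w _; exact: supp_Pb.
Qed.

End Entropy.

Section Cipher.
Context {R : realType} {A K C V : finType}.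
Context {P : A -> R} {pK : K -> R} {c : K -> A -> C} {v : A -> V}.
Hypotheses (P_ge0 : forall x, 0 <= P x) (pK_ge0 : forall k, 0 <= pK k).
Hypothesis sum_pK : \sum_k pK k = 1.
Hypothesis c_inj :
  forall k x x', 0 < P x -> 0 < P x' -> c k x = c k x' -> v x = v x' -> x = x'.

Let PK (w : A * K) : R := P w.1 * pK w.2.

(* [PK / b] is the conditional law of [x] given [v x], and [b] has mass at most
   [P(v x = y)] on each class [(c k x, v x) = (u, y)] because, for a fixed key,
   such a class meets the support of [P] at most once. *)
Lemma centropy_cipher_ge :
  centropy P id v <= centropy PK (fun w => c w.2 w.1) (fun w => v w.1).
Proof.
pose T := law P v.
have P_le_T x : P x <= T (v x) by rewrite /T /law (bigD1 x) //= lerDl sumr_ge0.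
have T_gt0 x : 0 < P x -> 0 < T (v x) by move=> /lt_le_trans; apply.
pose b w := if 0 < P w.1 then pK w.2 * T (v w.1) else 0.
have -> : centropy P id v = - \sum_w PK w * log2 (PK w / b w).
  rewrite centropy_idE sum_pairE; congr (- _); apply: eq_bigr => x _.
  rewrite -[LHS]mulr1 -sum_pK mulr_sumr; apply: eq_bigr => k _; rewrite /PK /b /=.
  have [Px_gt0|Px_le0] := ltP 0 (P x); last first.
    have -> : P x = 0 by apply/eqP; rewrite eq_le Px_le0 P_ge0.
    by rewrite !(mul0r, mulr0).
  have [pKk_gt0|pKk_le0] := ltP 0 (pK k); last first.
    have -> : pK k = 0 by apply/eqP; rewrite eq_le pKk_le0 pK_ge0.
    by rewrite !(mul0r, mulr0).
  have -> : P x * pK k / (pK k * T (v x)) = P x / T (v x).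
    by field; rewrite !lt0r_neq0 ?T_gt0.
  by rewrite mulrAC.
have b_ge0 w : 0 <= b w by rewrite /b; case: ifP => // _; rewrite mulr_ge0 ?sumr_ge0.
apply: centropy_ge_cross => // [w|[x k]|u y]; first exact: mulr_ge0.
  rewrite /PK /b /=; have [Px_gt0|Px_le0] := ltP 0 (P x).
    by rewrite pmulr_rgt0 // => pKk_gt0; rewrite mulr_gt0 ?T_gt0.
  have -> : P x = 0 by apply/eqP; rewrite eq_le Px_le0 P_ge0.
  by rewrite mul0r ltxx.
have fiber_le k : \sum_x (if (c k x, v x) == (u, y) then b (x, k) else 0) <= pK k * T y.
  have [x0 /andP[/eqP[cx0 vx0] Px0]|none] :=
    pickP (fun x => ((c k x, v x) == (u, y)) && (0 < P x)).
    rewrite (bigD1 x0) /= ?cx0 ?vx0 ?eqxx // big1 ?addr0 => [|x x_neq].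
      by rewrite /b /= Px0 vx0.
    case: eqP => // -[cx vx]; rewrite /b /=; case: ifP => // Px.
    by rewrite (c_inj k x x0 Px Px0) ?cx ?vx ?eqxx in x_neq.
  rewrite big1 ?mulr_ge0 ?sumr_ge0 // => x _; case: ifP => // ex.
  by rewrite /b /=; have := none x; rewrite ex /= => ->.
rewrite law_indep_fst // big_mkcond sum_pairE exchange_big /=.
by apply: le_trans (ler_sum _ (fun k _ => fiber_le k)) _; rewrite -mulr_suml sum_pK mul1r.
Qed.

End Cipher.

Lemma centropy_id_ge (R : realType) (A V : finType) (P : A -> R) (v : A -> V)
    (m : V -> R) (h : R) :
  (forall x, 0 <= P x) -> \sum_x P x = 1 ->
  (forall y, 0 <= m y) -> \sum_y m y <= 1 ->
  (forall x, 0 < P x -> 0 < m (v x) /\ h <= - log2 (P x / m (v x))) ->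
  h <= centropy P id v.
Proof.
move=> P_ge0 sumP m_ge0 sum_m surprisal.
pose T := law P v.
have P_le_T x : P x <= T (v x) by rewrite /T /law (bigD1 x) //= lerDl sumr_ge0.
have gibbs : 0 <= \sum_y T y * log2 (T y / m y).
  apply: gibbs_ineq => // [y|y Ty_gt0|]; first exact: sumr_ge0.
    have /hasP[x _ /andP[/eqP <- Px_gt0]] : has (fun x => (v x == y) && (0 < P x)) (index_enum A).
      by rewrite -psumr_neq0 ?lt0r_neq0.
    by case: (surprisal x Px_gt0).
  by rewrite -sumP (partition_big v xpredT).
have sum_over_x : \sum_y T y * log2 (T y / m y) = \sum_x P x * log2 (T (v x) / m (v x)).
  rewrite [RHS](partition_big v xpredT) //=; apply: eq_bigr => y _.
  by rewrite /T /law mulr_suml; apply: eq_bigr => x /eqP->.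
rewrite centropy_idE -sumrN.
apply: le_trans (_ : \sum_x P x * (h + log2 (T (v x) / m (v x))) <= _).
  rewrite (eq_bigr (fun x => h * P x + P x * log2 (T (v x) / m (v x)))); last first.
    by move=> x _; ring.
  by rewrite big_split /= -mulr_sumr sumP mulr1 lerDl -sum_over_x.
apply: ler_sum => x _; have [Px_gt0|Px_le0] := ltP 0 (P x); last first.
  have -> : P x = 0 by apply/eqP; rewrite eq_le Px_le0 P_ge0.
  by rewrite !mul0r oppr0.
have [mx_gt0 h_le] := surprisal x Px_gt0.
have Tx_gt0 : 0 < T (v x) by apply: lt_le_trans (P_le_T x).
rewrite -mulrN ler_pM2l //; rewrite !log2_div // in h_le *; lra.
Qed.

Definition cond_pmf {R : realType} {A : finType} (q : A -> R) (D : pred A) (x : A) : R :=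
  if D x then q x / \sum_(y | D y) q y else 0.

Section Conditioning.
Context {R : realType} {A : finType} {q : A -> R} {D : pred A}.
Hypotheses (q_ge0 : forall x, 0 <= q x) (Q_gt0 : 0 < \sum_(x | D x) q x).

Lemma cond_pmf_ge0 x : 0 <= cond_pmf q D x.
Proof. by rewrite /cond_pmf; case: ifP => // _; exact: divr_ge0 (q_ge0 x) (ltW Q_gt0). Qed.

Lemma cond_pmf_gt0 x : 0 < cond_pmf q D x -> D x /\ 0 < q x.
Proof. by rewrite /cond_pmf; case: ifP => Dx; rewrite ?ltxx // pmulr_lgt0 ?invr_gt0. Qed.

Lemma sum_cond_pmf : \sum_x cond_pmf q D x = 1.
Proof. by rewrite /cond_pmf -big_mkcond /= -mulr_suml divff ?lt0r_neq0. Qed.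

Lemma cond_pmf_surprisal x m : D x -> 0 < q x -> 0 < m ->
  - log2 (cond_pmf q D x / m) = - log2 (q x / m) + log2 (\sum_(y | D y) q y).
Proof.
move=> Dx qx_gt0 m_gt0; rewrite /cond_pmf Dx mulrAC log2_div ?divr_gt0 //.
by rewrite opprB addrC.
Qed.

End Conditioning.

Lemma cond_cipher_centropy_ge {R : realType} {A K C V : finType} {q : A -> R} {D : pred A}
    {pK : K -> R} {c : K -> A -> C} {v : A -> V} {m : V -> R} {h : R} :
  (forall x, 0 <= q x) -> 0 < \sum_(x | D x) q x ->
  (forall k, 0 <= pK k) -> \sum_k pK k = 1 ->
  (forall k, {in D &, forall x x', c k x = c k x' -> v x = v x' -> x = x'}) ->
  (forall y, 0 <= m y) -> \sum_y m y <= 1 ->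
  (forall x, D x -> 0 < q x -> 0 < m (v x) /\ h <= - log2 (q x / m (v x))) ->
  h + log2 (\sum_(x | D x) q x) <=
  centropy (fun w : A * K => cond_pmf q D w.1 * pK w.2) (fun w => c w.2 w.1) (fun w => v w.1).
Proof.
move=> q_ge0 Q_gt0 pK_ge0 sum_pK c_inj m_ge0 sum_m surprisal.
have cond_ge0 := cond_pmf_ge0 q_ge0 Q_gt0; have cond_gt0 := cond_pmf_gt0 Q_gt0.
apply: le_trans (centropy_cipher_ge cond_ge0 pK_ge0 sum_pK _); last first.
  by move=> k x x' /cond_gt0[Dx _] /cond_gt0[Dx' _]; apply: c_inj.
apply: centropy_id_ge => //; first exact: sum_cond_pmf.
move=> x /cond_gt0[Dx qx_gt0]; have [mx_gt0 h_le] := surprisal x Dx qx_gt0.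
by split; rewrite // cond_pmf_surprisal // lerD2r.
Qed.

Lemma cond_cipher_entropy_ge {R : realType} {A K C : finType} {q : A -> R} {D : pred A}
    {pK : K -> R} {c : K -> A -> C} {h : R} :
  (forall x, 0 <= q x) -> 0 < \sum_(x | D x) q x ->
  (forall k, 0 <= pK k) -> \sum_k pK k = 1 ->
  (forall k, {in D &, injective (c k)}) ->
  (forall x, D x -> 0 < q x -> h <= - log2 (q x)) ->
  h + log2 (\sum_(x | D x) q x) <=
  entropy (fun w : A * K => cond_pmf q D w.1 * pK w.2) (fun w => c w.2 w.1).
Proof.
move=> q_ge0 Q_gt0 pK_ge0 sum_pK c_inj surprisal.
rewrite entropy_centropy_unit; last first.
  rewrite sum_pairE -(sum_cond_pmf Q_gt0); apply: eq_bigr => x _.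
  by rewrite /= -mulr_sumr sum_pK mulr1.
apply: (cond_cipher_centropy_ge (v := fun=> tt) (m := fun=> 1)) => //.
- by move=> k x x' Dx Dx' cx _; exact: (c_inj k x x' Dx Dx' cx).
- by rewrite (big_pred1 tt) // => -[].
- by move=> x Dx qx_gt0; rewrite divr1; split; last exact: surprisal.
Qed.

Lemma surprisal_ge_of_typical (R : realType) (n : nat) (y H g : R) :
  (0 < n)%N -> 0 < y -> `|n%:R^-1 * log2 y^-1 - H| <= g -> n%:R * (H - g) <= - log2 y.
Proof.
move=> n_gt0 y_gt0; rewrite log2V // ler_norml => /andP[lo _].
by rewrite -ler_pdivlMl ?ltr0n //; lra.
Qed.

Lemma sum_prod_pmf {R : realType} (I : finType) {X : finType} (f : X -> R) :
  \sum_x f x = 1 -> \sum_(y : {ffun I -> X}) \prod_i f (y i) = 1.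
Proof.
by move=> sum_f; rewrite -(bigA_distr_bigA (fun (_ : I) x => f x)) big1.
Qed.

Definition pn_marg1 {R : realType} {X1 X2 : finType} {n : nat} (p : X1 * X2 -> R)
  (x1 : {ffun 'I_n -> X1}) : R := \prod_i marg1 p (x1 i).
Definition pn_marg2 {R : realType} {X1 X2 : finType} {n : nat} (p : X1 * X2 -> R)
  (x2 : {ffun 'I_n -> X2}) : R := \prod_i marg2 p (x2 i).

Section Memoryless.
Context {R : realType} {X1 X2 : finType} {n : nat} {p : X1 * X2 -> R}.
Hypothesis hp : is_pmf p.
Implicit Types (x : {ffun 'I_n -> X1} * {ffun 'I_n -> X2}).

Let p_ge0 : forall a, 0 <= p a. Proof. by case: hp. Qed.

Lemma pn_ge0 x : 0 <= pn p x.
Proof. exact: prodr_ge0. Qed.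

Lemma sum_pn : \sum_(x : {ffun 'I_n -> X1} * {ffun 'I_n -> X2}) pn p x = 1.
Proof.
rewrite sum_pairE -[RHS](sum_prod_pmf 'I_n (marg1 p)); last first.
  by case: hp => _ <-; rewrite /marg1 pair_big; apply: eq_bigr => -[].
by apply: eq_bigr => y _; rewrite /marg1 (bigA_distr_bigA (fun i b => p (y i, b))).
Qed.

Lemma pn_marg1_ge0 (x1 : {ffun 'I_n -> X1}) : 0 <= pn_marg1 p x1.
Proof. by apply: prodr_ge0 => i _; apply: sumr_ge0. Qed.

Lemma pn_marg2_ge0 (x2 : {ffun 'I_n -> X2}) : 0 <= pn_marg2 p x2.
Proof. by apply: prodr_ge0 => i _; apply: sumr_ge0. Qed.

Lemma sum_pn_marg1 : \sum_(x1 : {ffun 'I_n -> X1}) pn_marg1 p x1 = 1.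
Proof.
apply: sum_prod_pmf; case: hp => _ <-.
by rewrite /marg1 pair_big; apply: eq_bigr => -[].
Qed.

Lemma sum_pn_marg2 : \sum_(x2 : {ffun 'I_n -> X2}) pn_marg2 p x2 = 1.
Proof.
apply: sum_prod_pmf; case: hp => _ <-.
by rewrite /marg2 exchange_big pair_big; apply: eq_bigr => -[].
Qed.

Lemma pn_le_pn_marg1 x : pn p x <= pn_marg1 p x.1.
Proof.
apply: ler_prod => i _; rewrite p_ge0 /marg1 (bigD1 (x.2 i)) //=.
by rewrite lerDl sumr_ge0.
Qed.

Lemma pn_le_pn_marg2 x : pn p x <= pn_marg2 p x.2.
Proof.
apply: ler_prod => i _; rewrite p_ge0 /marg2 (bigD1 (x.1 i)) //=.
by rewrite lerDl sumr_ge0.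
Qed.

Hypothesis n_gt0 : (0 < n)%N.
Variable gamma : R.

Lemma typical_surprisal_1g2 x : typical p gamma x -> 0 < pn p x ->
  0 < pn_marg2 p x.2 /\ n%:R * (H1g2 p - gamma) <= - log2 (pn p x / pn_marg2 p x.2).
Proof.
case/and3P=> typ _ _ pnx_gt0; have m_gt0 := lt_le_trans pnx_gt0 (pn_le_pn_marg2 x).
split=> //; apply: surprisal_ge_of_typical; rewrite ?divr_gt0 //.
by rewrite /pn_marg2 -prodf_div.
Qed.

Lemma typical_surprisal_2g1 x : typical p gamma x -> 0 < pn p x ->
  0 < pn_marg1 p x.1 /\ n%:R * (H2g1 p - gamma) <= - log2 (pn p x / pn_marg1 p x.1).
Proof.
case/and3P=> _ typ _ pnx_gt0; have m_gt0 := lt_le_trans pnx_gt0 (pn_le_pn_marg1 x).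
split=> //; apply: surprisal_ge_of_typical; rewrite ?divr_gt0 //.
by rewrite /pn_marg1 -prodf_div.
Qed.

Lemma typical_surprisal_12 x : typical p gamma x -> 0 < pn p x ->
  n%:R * (H12 p - gamma) <= - log2 (pn p x).
Proof. by case/and3P=> _ _ typ pnx_gt0; apply: surprisal_ge_of_typical. Qed.

End Memoryless.

Theorem lemma3 (R : realType) (X1 X2 : finType)
  (p pK : X1 * X2 -> R) (hp : is_pmf p) (hpK : is_pmf pK)
  (n : nat) (hn : (0 < n)%N)
  (C1 C2 : finType) (M1 M2 : Type)
  (Phi1 : {ffun 'I_n -> X1} -> {ffun 'I_n -> X1} -> C1)
  (Phi2 : {ffun 'I_n -> X2} -> {ffun 'I_n -> X2} -> C2)
  (Psi : {ffun 'I_n -> X1} -> {ffun 'I_n -> X2} -> C1 -> C2 ->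
         {ffun 'I_n -> X1} * {ffun 'I_n -> X2})
  (phi1 : {ffun 'I_n -> X1} -> M1) (phi2 : {ffun 'I_n -> X2} -> M2)
  (psi : M1 -> M2 -> {ffun 'I_n -> X1} * {ffun 'I_n -> X2})
  (hdec : forall k1 k2 x1 x2,
     Psi k1 k2 (Phi1 k1 x1) (Phi2 k2 x2) = psi (phi1 x1) (phi2 x2))
  (gamma : R) (hgamma : 0 < gamma) :
  let Dt := fun x : {ffun 'I_n -> X1} * {ffun 'I_n -> X2} =>
              typical p gamma x && (psi (phi1 x.1) (phi2 x.2) == x) in
  let Q12 := \sum_(x | Dt x) pn p x in
  (* sample space: (source pair, key pair); law of (tilde X, K) *)
  let P := fun w : ({ffun 'I_n -> X1} * {ffun 'I_n -> X2}) *
                   ({ffun 'I_n -> X1} * {ffun 'I_n -> X2}) =>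
             (if Dt w.1 then pn p w.1 / Q12 else 0) * pn pK w.2 in
  let Xt1 := fun w : ({ffun 'I_n -> X1} * {ffun 'I_n -> X2}) *
                     ({ffun 'I_n -> X1} * {ffun 'I_n -> X2}) => w.1.1 in
  let Xt2 := fun w : ({ffun 'I_n -> X1} * {ffun 'I_n -> X2}) *
                     ({ffun 'I_n -> X1} * {ffun 'I_n -> X2}) => w.1.2 in
  let Ct1 := fun w : ({ffun 'I_n -> X1} * {ffun 'I_n -> X2}) *
                     ({ffun 'I_n -> X1} * {ffun 'I_n -> X2}) => Phi1 w.2.1 w.1.1 in
  let Ct2 := fun w : ({ffun 'I_n -> X1} * {ffun 'I_n -> X2}) *
                     ({ffun 'I_n -> X1} * {ffun 'I_n -> X2}) => Phi2 w.2.2 w.1.2 in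
  0 < Q12 ->
  [/\ centropy P Ct1 Xt2 >= n%:R * (H1g2 p - gamma) + log2 Q12,
      centropy P Ct2 Xt1 >= n%:R * (H2g1 p - gamma) + log2 Q12 &
      entropy P (fun w => (Ct1 w, Ct2 w)) >= n%:R * (H12 p - gamma) + log2 Q12].
Proof.
move=> Dt Q12 P Xt1 Xt2 Ct1 Ct2 Q12_gt0.
have p_ge0 := pn_ge0 hp; have pK_ge0 := pn_ge0 hpK; have sum_pK := sum_pn hpK.
have decode k x : Dt x -> Psi k.1 k.2 (Phi1 k.1 x.1) (Phi2 k.2 x.2) = x.
  by case/andP=> _ /eqP; rewrite hdec.
have decode_inj k : {in Dt &, forall x x',
    Phi1 k.1 x.1 = Phi1 k.1 x'.1 -> Phi2 k.2 x.2 = Phi2 k.2 x'.2 -> x = x'}.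
  by move=> x x' Dx Dx' e1 e2; rewrite -(decode k x Dx) -(decode k x' Dx') e1 e2.
have typ x : Dt x -> typical p gamma x by case/andP.
split.
- apply: (cond_cipher_centropy_ge (c := fun k x => Phi1 k.1 x.1) (v := snd)
    (m := pn_marg2 p)) => //.
  + by move=> k x x' Dx Dx' e1 e2; apply: (decode_inj k) => //; rewrite e2.
  + exact: pn_marg2_ge0.
  + by rewrite sum_pn_marg2.
  + by move=> x /typ; apply: typical_surprisal_1g2.
- apply: (cond_cipher_centropy_ge (c := fun k x => Phi2 k.2 x.2) (v := fst)
    (m := pn_marg1 p)) => //.
  + by move=> k x x' Dx Dx' e2 e1; apply: (decode_inj k) => //; rewrite e1.
  + exact: pn_marg1_ge0.
  + by rewrite sum_pn_marg1.
  + by move=> x /typ; apply: typical_surprisal_2g1.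
- apply: (cond_cipher_entropy_ge (c := fun k x => (Phi1 k.1 x.1, Phi2 k.2 x.2))) => //.
  + by move=> k x x' Dx Dx' [e1 e2]; apply: (decode_inj k).
  + by move=> x /typ; apply: typical_surprisal_12.
Qed.
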